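(* Let $A\in\mathbb Z^{d\times n}$ with $\ker(A)\cap\mathbb N^n=\{0\}$. Suppose that $A$ has a unique minimal Markov basis $M$ up to replacing its elements by their negatives. If $M$ is distance reducing, then $S(A)=D(A)=M(A)=\mathcal D(A)$.
   Context: For $z\in\mathbb Z^n$, $z^\pm\in\mathbb N^n$ are the unique vectors with disjoint supports and $z=z^+-z^-$; $\|\cdot\|$ is the $1$-norm; $\le$ is coordinatewise. A Markov basis is a set $B\subseteq\ker(A)$ whose binomials $x^{u^+}-x^{u^-}$ generate the toric ideal $I_A=\langle x^{u^+}-x^{u^-}:u\in\ker(A)\rangle$; minimal means no proper subset is one. $M(A)$ is the union of all minimal Markov bases. $S(A)$ is the set of nonzero $z\in\ker(A)$ with no decomposition $z=u+v$, $u,v\in\ker(A)\setminus\{0\}$, such that $u_i>0\Rightarrow v_i\ge0$ for all $i$. A positive (resp. negative) distance decomposition of $z$ is $z=u+v$ with $u,v\in\ker(A)\setminus\{0\}$, $u^+\le z^+$ (resp. $u^-\le z^-$), $\|v\|<\|z\|$; $D(A)$ is the set of nonzero $z\in\ker(A)$ admitting neither. For nonzero $z\in\ker(A)$, $u$ reduces the distance of $z$ if there exist $(p,q)\in\{(z^+,z^-),(z^-,z^+)\}$ and $\varepsilon\in\{\pm1\}$ with $p+\varepsilon u\in\mathbb N^n$ and $\|p+\varepsilon u-q\|<\|z\|$; $B$ is distance reducing if every nonzero $z\in\ker(A)$ has its distance reduced by some element of $B$. $\mathcal D(A)$ is the union of all minimal distance reducing Markov bases, i.e., distance reducing sets $B\subseteq\ker(A)$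 no proper subset of which is distance reducing. *)

From HB Require Import structures.
From mathcomp Require Import all_boot all_order all_algebra.
From mathcomp Require Import mpoly.
Set Implicit Arguments. Unset Strict Implicit. Unset Printing Implicit Defensive.
Import Order.TTheory GRing.Theory Num.Theory.
Local Open Scope ring_scope.

Section Toric.
Variables (d n : nat) (A : 'M[int]_(d, n)).

Definition inker (z : 'cV[int]_n) : Prop := A *m z = 0.

Definition vpos (z : 'cV[int]_n) (i : 'I_n) : nat :=
  if (0 <= z i ord0) then absz (z i ord0) else 0%N.
Definition vneg (z : 'cV[int]_n) (i : 'I_n) : nat :=
  if (z i ord0 < 0) then absz (z i ord0) else 0%N.

Definition norm1 (z : 'cV[int]_n) : nat := (\sum_(i < n) absz (z i ord0))%N.

Definition nat2int (p : 'I_n -> nat) : 'cV[int]_n := \col_i (p i)%:Z.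

Variable K : fieldType.

Definition monom (u : 'I_n -> nat) : {mpoly K[n]} := 'X_[ [multinom u i | i < n] ].

Definition binom (z : 'cV[int]_n) : {mpoly K[n]} := monom (vpos z) - monom (vneg z).

Definition in_ideal_gen (G : {mpoly K[n]} -> Prop) (p : {mpoly K[n]}) : Prop :=
  exists s : seq ({mpoly K[n]} * {mpoly K[n]}),
    (forall c, c \in s -> G c.2) /\ p = \sum_(c <- s) c.1 * c.2.

Definition binoms (B : 'cV[int]_n -> Prop) (p : {mpoly K[n]}) : Prop :=
  exists2 u, B u & p = binom u.

Definition toric_ideal (p : {mpoly K[n]}) : Prop := in_ideal_gen (binoms inker) p.

Definition markov_basis (B : 'cV[int]_n -> Prop) : Prop :=
  (forall z, B z -> inker z) /\
  (forall p, in_ideal_gen (binoms B) p <-> toric_ideal p).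

Definition minimal_markov_basis (B : 'cV[int]_n -> Prop) : Prop :=
  markov_basis B /\
  (forall B', (forall z, B' z -> B z) -> markov_basis B' -> forall z, B z -> B' z).

Definition Mset (z : 'cV[int]_n) : Prop :=
  exists2 B, minimal_markov_basis B & B z.

Definition same_up_to_sign (B M : 'cV[int]_n -> Prop) : Prop :=
  (forall z, B z -> M z \/ M (- z)) /\ (forall z, M z -> B z \/ B (- z)).

Definition unique_minimal_markov (M : 'cV[int]_n -> Prop) : Prop :=
  minimal_markov_basis M /\
  (forall B, minimal_markov_basis B -> same_up_to_sign B M).

End Toric.

Section Sets.
Variables (d n : nat) (A : 'M[int]_(d, n)).

Definition Sset (z : 'cV[int]_n) : Prop :=
  inker A z /\ z <> 0 /\
  ~ (exists u v, inker A u /\ inker A v /\ u <> 0 /\ v <> 0 /\ z = u + v /\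
                 (forall i, 0 < u i ord0 -> 0 <= v i ord0)).

Definition pos_dist_decomp (z : 'cV[int]_n) : Prop :=
  exists u v, inker A u /\ inker A v /\ u <> 0 /\ v <> 0 /\ z = u + v /\
    (forall i, (vpos u i <= vpos z i)%N) /\ (norm1 v < norm1 z)%N.

Definition neg_dist_decomp (z : 'cV[int]_n) : Prop :=
  exists u v, inker A u /\ inker A v /\ u <> 0 /\ v <> 0 /\ z = u + v /\
    (forall i, (vneg u i <= vneg z i)%N) /\ (norm1 v < norm1 z)%N.

Definition Dset (z : 'cV[int]_n) : Prop :=
  inker A z /\ z <> 0 /\ ~ pos_dist_decomp z /\ ~ neg_dist_decomp z.

Definition reduces_distance (u z : 'cV[int]_n) : Prop :=
  exists (pq : ('I_n -> nat) * ('I_n -> nat)) (eps : int),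
    (pq = (vpos z, vneg z) \/ pq = (vneg z, vpos z)) /\
    (eps = 1 \/ eps = -1) /\
    (forall i, 0 <= (nat2int pq.1 + eps *: u) i ord0) /\
    (norm1 (nat2int pq.1 + eps *: u - nat2int pq.2) < norm1 z)%N.

Definition distance_reducing (B : 'cV[int]_n -> Prop) : Prop :=
  forall z, inker A z -> z <> 0 -> exists2 u, B u & reduces_distance u z.

Definition minimal_distance_reducing (B : 'cV[int]_n -> Prop) : Prop :=
  (forall z, B z -> inker A z) /\ distance_reducing B /\
  (forall B', (forall z, B' z -> B z) -> distance_reducing B' -> forall z, B z -> B' z).

Definition Dcalset (z : 'cV[int]_n) : Prop :=
  exists2 B, minimal_distance_reducing B & B z.

End Sets.

(* Markov bases are described combinatorially (Diaconis-Sturmfels): B generates I_A iff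
   every fiber {x in N^n | A x = b} is connected by the moves +-u, u in B, that stay in N^n.
   A path gives ideal membership step by step; conversely, the indicator function of a
   connected component is a linear form on K[x] that kills the ideal generated by B.

   Let M be the minimal Markov basis, unique up to sign, and z in M.  As ker A meets N^n
   only in 0, the move -z applies in the fiber of z^+ only at z^+ itself.  So if this fiber
   had a third point w, a path would join w to z^+ or z^- without using z, and exchanging z
   for w - z^- (or its analogue) would produce a second minimal Markov basis avoiding +-z.
   Hence the fiber is {z^+, z^-}, which puts z in S(A), and S(A) is always contained in
   D(A).  Conversely an element of D(A) has its distance reduced only by itself up to sign,
   so the distance reducing M contains it up to sign.  The same fact confines every minimal
   distance reducing set to +-M, while M and its sign changes are minimal Markov bases that
   reduce distances, hence minimal distance reducing. *)

From HB Require Import structures.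
From mathcomp Require Import all_boot all_order all_algebra.
From mathcomp Require Import mpoly ssrcomplements zify.
From Stdlib Require Import Classical ClassicalEpsilon.
Import Order.TTheory GRing.Theory Num.Theory.
Local Open Scope ring_scope.
Set Implicit Arguments. Unset Strict Implicit. Unset Printing Implicit Defensive.

Section Coordinates.
Variable n : nat.
Implicit Types (a b c g x y z : 'cV[int]_n).

Definition nonneg x := forall i, 0 <= x i ord0.
Definition zpos z : 'cV[int]_n := nat2int (vpos z).
Definition zneg z : 'cV[int]_n := nat2int (vneg z).

Lemma col_eq x y : (forall i, x i ord0 = y i ord0) -> x = y.
Proof. by move=> h; apply/matrixP => i j; rewrite (ord1 j). Qed.

Lemma eq_entry x y i : x = y -> x i ord0 = y i ord0.
Proof. by move->. Qed.

Lemma zposE z i : zpos z i ord0 = if 0 <= z i ord0 then z i ord0 else 0.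
Proof. by rewrite mxE /vpos; case: ifP => // /gez0_abs. Qed.

Lemma znegE z i : zneg z i ord0 = if z i ord0 < 0 then - z i ord0 else 0.
Proof. by rewrite mxE /vneg; case: ifP => // /ltz0_abs. Qed.

Lemma entryD x y i : (x + y) i ord0 = x i ord0 + y i ord0 :> int.
Proof. by rewrite mxE. Qed.

Lemma entryN x i : (- x) i ord0 = - x i ord0 :> int.
Proof. by rewrite mxE. Qed.

Lemma entry0 i : (0%R : 'cV[int]_n) i ord0 = 0%R :> int.
Proof. by rewrite mxE. Qed.

End Coordinates.

Ltac case_ifs :=
  repeat match goal with |- context [if ?b then _ else _] => case: (boolP b) => ? end.
Ltac entry_lia := rewrite ?(zposE, znegE, entryD, entryN, entry0); case_ifs; lia.
Ltac col_lia := apply: col_eq => i; entry_lia.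

Section Reach.
Variable n : nat.
Implicit Types (a b c g x y z : 'cV[int]_n).

Lemma zpos_sub_zneg z : zpos z - zneg z = z.
Proof. col_lia. Qed.

Lemma nonneg_zpos z : nonneg (zpos z).
Proof. move=> i; entry_lia. Qed.

Lemma nonneg_zneg z : nonneg (zneg z).
Proof. move=> i; entry_lia. Qed.

Lemma zpos0 : zpos (0 : 'cV[int]_n) = 0.
Proof. col_lia. Qed.

Lemma zneg0 : zneg (0 : 'cV[int]_n) = 0.
Proof. col_lia. Qed.

Lemma zposN z : zpos (- z) = zneg z.
Proof. col_lia. Qed.

Lemma znegN z : zneg (- z) = zpos z.
Proof. col_lia. Qed.

Lemma nonnegD x y : nonneg x -> nonneg y -> nonneg (x + y).
Proof. move=> hx hy i; have := hx i; have := hy i; entry_lia. Qed.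

Lemma nonneg_addr_eq0 x y : nonneg x -> nonneg y -> x + y = 0 -> x = 0.
Proof.
move=> hx hy e; apply: col_eq => i.
have := eq_entry i e; have := hx i; have := hy i; entry_lia.
Qed.

Lemma eq_opp_eq0 x : x = - x -> x = 0.
Proof. move=> e; apply: col_eq => i; have := eq_entry i e; entry_lia. Qed.

(* [g] is the coordinatewise minimum of [a] and [b]. *)
Lemma common_part a b : nonneg a -> nonneg b ->
  exists2 g, nonneg g & a = zpos (a - b) + g /\ b = zneg (a - b) + g.
Proof.
move=> ha hb; exists (a - zpos (a - b)).
  by move=> i; have := ha i; have := hb i; entry_lia.
by split; apply: col_eq => i; have := ha i; have := hb i; entry_lia.
Qed.

Inductive reach (B : 'cV[int]_n -> Prop) x : 'cV[int]_n -> Prop :=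
| reach0 : reach B x x
| reachS y y' u : reach B x y -> B u -> y' = y + u \/ y' = y - u -> nonneg y' ->
    reach B x y'.

Implicit Types (B : 'cV[int]_n -> Prop).

Lemma reach_nonneg B x y : reach B x y -> nonneg x -> nonneg y.
Proof. by elim. Qed.

Lemma reach1 B y y' u : B u -> y' = y + u \/ y' = y - u -> nonneg y' -> reach B y y'.
Proof. exact: reachS (reach0 B y). Qed.

Lemma reach_trans B x y z : reach B x y -> reach B y z -> reach B x z.
Proof. by move=> rxy; elim=> // y1 y2 u _ rxy1 Bu e h; apply: reachS rxy1 Bu e h. Qed.

Lemma reach_sym B x y : nonneg x -> reach B x y -> reach B y x.
Proof.
move=> hx; elim=> [|y1 y2 u rxy1 ry1x Bu e _]; first exact: reach0.
apply: reach_trans ry1x; apply: reach1 Bu _ (reach_nonneg rxy1 hx).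
by case: e => ->; [right; rewrite addrK | left; rewrite subrK].
Qed.

Lemma reach_sub B B' x y : (forall u, B u -> B' u) -> reach B x y -> reach B' x y.
Proof. by move=> sB; elim=> [|y1 y2 u _ r Bu]; [apply: reach0 | apply: reachS r (sB u Bu)]. Qed.

Lemma reach_shift B x y c : nonneg c -> reach B x y -> reach B (x + c) (y + c).
Proof.
move=> hc; elim=> [|y1 y2 u _ r Bu e h]; first exact: reach0.
apply: reachS r Bu _ (nonnegD h hc).
by case: e => ->; [left|right]; rewrite addrAC.
Qed.

Lemma reach_diff B a b : nonneg a -> nonneg b ->
  reach B (zpos (a - b)) (zneg (a - b)) -> reach B a b.
Proof.
move=> ha hb r; have [g hg [ea eb]] := common_part ha hb.
by move: (reach_shift hg r); rewrite -ea -eb.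
Qed.

Lemma reach_move B u : B u -> reach B (zpos u) (zneg u).
Proof.
by move=> Bu; apply: reach1 Bu _ (nonneg_zneg u); right; col_lia.
Qed.

Lemma reach_move_opp B u : B (- u) -> reach B (zpos u) (zneg u).
Proof.
by move=> Bu; apply: reach1 Bu _ (nonneg_zneg u); left; col_lia.
Qed.

(* A [B]-move at any point is a translate of a [B']-path from [zpos u] to [zneg u]. *)
Lemma reach_subst B B' x y : (forall u, B u -> reach B' (zpos u) (zneg u)) ->
  nonneg x -> reach B x y -> reach B' x y.
Proof.
move=> hB hx; elim=> [|y1 y2 u rxy1 r Bu e h2]; first exact: reach0.
apply: reach_trans r _; have h1 := reach_nonneg rxy1 hx.
case: e => e; subst y2.
- by apply: (reach_sym h2); apply: reach_diff h2 h1 _; rewrite addrC addKr; apply: hB.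
- by apply: reach_diff h1 h2 _; rewrite opprB addrC subrK; apply: hB.
Qed.

End Reach.

Section MarkovMoves.
Variables (d n : nat) (A : 'M[int]_(d, n)).
Implicit Types (B : 'cV[int]_n -> Prop) (a b c g s t u v w x y z : 'cV[int]_n).

Definition connects B :=
  (forall u, B u -> inker A u) /\ forall z, inker A z -> reach B (zpos z) (zneg z).

Definition minimal_connecting B :=
  connects B /\ forall B', (forall z, B' z -> B z) -> connects B' -> forall z, B z -> B' z.

Definition positive_kernel := forall z, inker A z -> nonneg z -> z = 0.

Definition without B s v := B v /\ v <> s.
Definition exchange B s t v := without B s v \/ v = t.

(* In the fiber of [x], the move [-s] can be applied only at [zpos s]. *)
Definition rigid_at s x := forall c, nonneg c -> A *m (zpos s + c) = A *m x -> c = 0.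

Lemma inker_sub a b : A *m a = A *m b -> inker A (a - b).
Proof. by move=> e; rewrite /inker mulmxBr e subrr. Qed.

Lemma inkerN z : inker A z -> inker A (- z).
Proof. by rewrite /inker mulmxN => ->; rewrite oppr0. Qed.

Lemma inkerD x y : inker A x -> inker A y -> inker A (x + y).
Proof. by rewrite /inker mulmxDr => -> ->; rewrite addr0. Qed.

Lemma mulmx_zpos_zneg z : inker A z -> A *m zpos z = A *m zneg z.
Proof. by move=> kz; apply/eqP; rewrite -subr_eq0 -mulmxBr zpos_sub_zneg kz. Qed.

Lemma reach_mulmx B x y : (forall u, B u -> inker A u) -> reach B x y -> A *m y = A *m x.
Proof.
move=> kB; elim=> // y1 y2 u _ e1 Bu [->|->] _; have ku := kB u Bu;
  by rewrite ?mulmxBr ?mulmxDr ku ?subr0 ?addr0.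
Qed.

Lemma connects_reach B a b : connects B -> nonneg a -> nonneg b -> A *m a = A *m b ->
  reach B a b.
Proof. by move=> hB ha hb e; apply: reach_diff ha hb (hB.2 _ (inker_sub e)). Qed.

Lemma connects_subst B B' : (forall u, B' u -> inker A u) ->
  (forall u, B u -> reach B' (zpos u) (zneg u)) -> connects B -> connects B'.
Proof.
move=> kB' hB [_ cB]; split=> // z kz.
exact: reach_subst hB (nonneg_zpos z) (cB z kz).
Qed.

Lemma rigid_move s x y y' : rigid_at s x ->
    nonneg y -> nonneg y' -> A *m y = A *m x -> A *m y' = A *m x ->
    y' = y + s \/ y' = y - s ->
  y = zneg s /\ y' = zpos s \/ y = zpos s /\ y' = zneg s.
Proof.
move=> rigid hy hy' ey ey' [e|e].
- have [g hg []] := common_part hy' hy.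
  have -> : y' - y = s by rewrite e addrC addKr.
  move=> ea eb.
  have g0 : g = 0 by apply: (rigid g hg); rewrite -ea.
  by left; rewrite eb ea g0 !addr0.
- have [g hg []] := common_part hy hy'.
  have -> : y - y' = s by rewrite e opprB addrC subrK.
  move=> ea eb.
  have g0 : g = 0 by apply: (rigid g hg); rewrite -ea.
  by right; rewrite eb ea g0 !addr0.
Qed.

Lemma reach_split B s x y : (forall u, B u -> inker A u) -> B s -> nonneg x ->
    rigid_at s x -> reach B x y ->
  reach (without B s) x y \/
  reach (without B s) x (zpos s) /\ reach (without B s) (zneg s) y \/
  reach (without B s) x (zneg s) /\ reach (without B s) (zpos s) y.
Proof.
move=> kB Bs hx rigid; elim=> [|y1 y2 u rxy1 IH Bu e h2]; first by left; apply: reach0.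
have h1 := reach_nonneg rxy1 hx.
have [us|nus] := classic (u = s); last first.
  have step : reach (without B s) y1 y2 by apply: reach1 e h2.
  case: IH => [r|[[r1 r2]|[r1 r2]]].
  - by left; apply: reach_trans r step.
  - by right; left; split=> //; apply: reach_trans r2 step.
  - by right; right; split=> //; apply: reach_trans r2 step.
subst u; have e1 := reach_mulmx kB rxy1; have e2 := reach_mulmx kB (reachS rxy1 Bs e h2).
case: (rigid_move rigid h1 h2 e1 e2 e) => [[E1 E2]|[E1 E2]]; rewrite E2; rewrite E1 in IH.
- case: IH => [r|[[r1 r2]|[r1 r2]]].
  + by right; right; split=> //; apply: reach0.
  + by left.
  + by right; right; split=> //; apply: reach0.
- case: IH => [r|[[r1 r2]|[r1 r2]]].
  + by right; left; split=> //; apply: reach0.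
  + by right; left; split=> //; apply: reach0.
  + by left.
Qed.

Section Minimal.
Variable M : 'cV[int]_n -> Prop.
Hypothesis hM : minimal_connecting M.

Lemma minimal_inker z : M z -> inker A z.
Proof. exact: hM.1.1. Qed.

Lemma minimal_no_bypass z : M z -> ~ reach (without M z) (zpos z) (zneg z).
Proof.
move=> Mz r; suff : without M z z by case.
apply: hM.2 Mz => [v []//|].
apply: connects_subst hM.1 => [u [/minimal_inker]//|u Mu].
by have [->|nuz] := classic (u = z); [|apply: reach_move].
Qed.

Lemma minimal_neq0 z : M z -> z <> 0.
Proof.
by move=> Mz z0; apply: (minimal_no_bypass Mz); rewrite z0 zpos0 zneg0; apply: reach0.
Qed.

Lemma minimal_not_opp z : M z -> ~ M (- z).
Proof.
move=> Mz Mnz; apply: (minimal_no_bypass Mnz); apply: reach_move_opp; rewrite opprK.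
by split=> // /eq_opp_eq0; apply: minimal_neq0.
Qed.

Lemma exchange_connecting_mem z t B : M z ->
  (forall v, B v -> exchange M z t v) -> connects B -> B t.
Proof.
move=> Mz sB hB; apply: NNPP => Bt; apply: (minimal_no_bypass Mz).
apply: reach_sub (hB.2 z (minimal_inker Mz)) => v Bv.
by case: (sB v Bv) => // evt; case: Bt; rewrite -evt.
Qed.

Lemma exchange_minimal z t : M z -> inker A t ->
    reach (exchange M z t) (zpos z) (zneg z) ->
    (forall B, (forall v, B v -> exchange M z t v) -> connects B ->
       reach (exchange B t z) (zpos t) (zneg t)) ->
  minimal_connecting (exchange M z t).
Proof.
move=> Mz kt rz rt.
have kE u : exchange M z t u -> inker A u by case=> [[/minimal_inker]|->].
split.
  apply: connects_subst kE _ hM.1 => u Mu.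
  by have [->|nuz] := classic (u = z); [|apply: reach_move; left].
move=> B sB hB; have Bt := exchange_connecting_mem Mz sB hB.
have sB' v : exchange B t z v -> M v.
  by case=> [[/sB [[]|->]]|->].
have hB' : connects (exchange B t z).
  apply: (connects_subst _ _ hB) => [u /sB' /minimal_inker //|u Bu].
  by have [->|nut] := classic (u = t); [apply: rt sB hB|apply: reach_move; left].
move=> v [[Mv nvz]|->] //.
by case: (hM.2 _ sB' hB' v Mv) => [[]|].
Qed.

Lemma exchange_opp_minimal z : M z -> minimal_connecting (exchange M z (- z)).
Proof.
move=> Mz; apply: exchange_minimal => //; first exact: inkerN (minimal_inker Mz).
- by apply: reach_move_opp; right.
- by move=> B _ _; apply: reach_move_opp; rewrite opprK; right.
Qed.

Hypothesis hpos : positive_kernel.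

Lemma positive_rigid_at s x : A *m zpos s = A *m x -> rigid_at s x.
Proof.
move=> esx c hc; rewrite mulmxDr esx -{2}[A *m x]addr0 => /addrI Ac.
exact: hpos Ac hc.
Qed.

Lemma bypass_disjoint_support z w : M z -> nonneg w -> A *m w = A *m zpos z ->
    reach (without M z) w (zpos z) ->
  zpos (w - zneg z) = w /\ zneg (w - zneg z) = zneg z.
Proof.
move=> Mz hw ew rw; have kz := minimal_inker Mz.
have kt : inker A (w - zneg z) by apply: inker_sub; rewrite ew mulmx_zpos_zneg.
have [g hg [ea eb]] := common_part hw (nonneg_zneg z).
move: kt ea eb; set t := w - zneg z => kt ea eb.
suff g0 : g = 0 by rewrite g0 !addr0 in ea eb.
have Ag : A *m g = A *m zpos z - A *m zpos t by rewrite -ew {1}ea mulmxDr addrC addKr.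
have fiber_g0 : A *m zpos t = A *m zpos z -> g = 0.
  by move=> e; apply: hpos hg; rewrite /inker Ag e subrr.
have rigid : rigid_at z (zpos t).
  move=> c hc e; apply: (nonneg_addr_eq0 hc hg); apply: hpos (nonnegD hc hg).
  by rewrite /inker mulmxDr Ag -e mulmxDr opprD addNKr subrr.
have kM := minimal_inker.
case: (reach_split kM Mz (nonneg_zpos t) rigid (hM.1.2 t kt)) => [r|[[r _]|[r _]]].
- case: (minimal_no_bypass Mz); apply: reach_trans (reach_sym hw rw) _.
  by rewrite ea eb; apply: reach_shift.
- by apply: fiber_g0; rewrite (reach_mulmx _ r) // => u [/kM].
- by apply: fiber_g0; rewrite (mulmx_zpos_zneg kz) (reach_mulmx _ r) // => u [/kM].
Qed.

Lemma bypass_avoiding_basis z w : M z -> nonneg w -> A *m w = A *m zpos z ->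
    w <> zpos z -> w <> zneg z -> reach (without M z) w (zpos z) ->
  exists2 M', minimal_connecting M' & ~ M' z /\ ~ M' (- z).
Proof.
move=> Mz hw ew nwp nwn rw; have kz := minimal_inker Mz.
have [ept ent] := bypass_disjoint_support Mz hw ew rw.
have kt : inker A (w - zneg z) by apply: inker_sub; rewrite ew mulmx_zpos_zneg.
move: kt ept ent; set t := w - zneg z => kt ept ent.
exists (exchange M z t); last first.
  split=> [[[_ []] // | ezt] | [[Mnz _] | ezt]].
  - by apply: nwp; rewrite -ept -ezt.
  - exact: minimal_not_opp Mz Mnz.
  - by apply: nwn; rewrite -ept -ezt zposN.
apply: (exchange_minimal Mz kt).
  apply: reach_trans (reach_sub _ (reach_sym hw rw)) _ => [v|]; first by left.
  by rewrite -{1}ept -ent; apply: reach_move; right.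
move=> B sB hB; have Bt := exchange_connecting_mem Mz sB hB.
have sB' v : without B t v -> without M z v.
  by case=> /sB [//|->].
have rigid : rigid_at t w by apply: positive_rigid_at; rewrite ept.
rewrite ept ent.
have rwz := connects_reach hB hw (nonneg_zpos z) ew.
case: (reach_split hB.1 Bt hw rigid rwz) => [r|[[_ r]|[r _]]].
- apply: reach_trans (reach_sub _ r) _ => [v|]; first by left.
  by apply: reach_move; right.
- case: (minimal_no_bypass Mz); apply: reach_sym (nonneg_zneg z) _.
  by rewrite -ent; apply: reach_sub sB' r.
- by rewrite -ent; apply: reach_sub r => v; left.
Qed.

End Minimal.

Lemma bypass_avoiding_basis_pm M z w : minimal_connecting M -> positive_kernel -> M z ->
    nonneg w -> A *m w = A *m zpos z -> w <> zpos z -> w <> zneg z ->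
    reach (without M z) w (zpos z) \/ reach (without M z) w (zneg z) ->
  exists2 M', minimal_connecting M' & ~ M' z /\ ~ M' (- z).
Proof.
move=> hM hpos Mz hw ew nwp nwn [r|r].
  exact: (bypass_avoiding_basis hM hpos Mz hw ew nwp nwn r).
(* The second case is the first one for the basis in which [z] is replaced by [- z]. *)
have hMn := exchange_opp_minimal hM Mz.
have Mnz : exchange M z (- z) (- z) by right.
have ewn : A *m w = A *m zpos (- z).
  by rewrite zposN -(mulmx_zpos_zneg (minimal_inker hM Mz)).
have r' : reach (without (exchange M z (- z)) (- z)) w (zpos (- z)).
  rewrite zposN; apply: reach_sub r => v [Mv nvz]; split; first by left.
  by move=> evz; apply: (minimal_not_opp hM Mz); rewrite -evz.
have [||M' hM' [nMnz nMz]] := bypass_avoiding_basis hMn hpos Mnz hw ewn _ _ r';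
  rewrite ?zposN ?znegN //.
by exists M'; rewrite opprK in nMz.
Qed.

Section UniqueMinimal.
Variable M : 'cV[int]_n -> Prop.
Hypotheses (hpos : positive_kernel) (hM : minimal_connecting M).
Hypothesis hU : forall B, minimal_connecting B -> forall z, M z -> B z \/ B (- z).

Lemma unique_minimal_fiber z w : M z -> nonneg w -> A *m w = A *m zpos z ->
  w = zpos z \/ w = zneg z.
Proof.
move=> Mz hw ew; apply: NNPP => /not_or_and [nwp nwn].
have [M' hM' [nMz nMnz]] : exists2 M', minimal_connecting M' & ~ M' z /\ ~ M' (- z).
  apply: (bypass_avoiding_basis_pm hM hpos Mz hw ew nwp nwn).
  have rigid := positive_rigid_at hpos (esym ew).
  have rwz := connects_reach hM.1 hw (nonneg_zpos z) ew.
  by case: (reach_split (minimal_inker hM) Mz hw rigid rwz) => [r|[[r _]|[r _]]]; [left|left|right].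
by case: (hU hM' Mz).
Qed.

End UniqueMinimal.
End MarkovMoves.

Section Distance.
Variables (d n : nat) (A : 'M[int]_(d, n)).
Implicit Types (B : 'cV[int]_n -> Prop) (e u v z : 'cV[int]_n).

Lemma Sset_Dset z : Sset A z -> Dset A z.
Proof.
move=> [kz [nz hS]]; do 2 split=> //; split.
- move=> [u [v [ku [kv [nu [nv [e [hle _]]]]]]]]; apply: hS; exists u, v.
  do 5 split=> //; move=> i; have := hle i; have := eq_entry i e; rewrite /vpos; entry_lia.
- move=> [u [v [ku [kv [nu [nv [e [hle _]]]]]]]]; apply: hS; exists v, u.
  do 4 split=> //; split; first by rewrite addrC.
  move=> i; have := hle i; have := eq_entry i e; rewrite /vneg; entry_lia.
Qed.

Lemma norm1N z : norm1 (- z) = norm1 z.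
Proof. by apply: eq_bigr => i _; rewrite entryN abszN. Qed.

Lemma reduces_distanceP u z : reduces_distance u z ->
  exists2 e, e = u \/ e = - u &
    nonneg (zpos z + e) /\ (norm1 (z + e) < norm1 z)%N \/
    nonneg (zneg z + e) /\ (norm1 (e - z) < norm1 z)%N.
Proof.
move=> [pq [eps [epq [eeps [hnn hlt]]]]].
have [e Ee Eu] : exists2 e, eps *: u = e & e = u \/ e = - u.
  by case: eeps => ->; [exists u; [rewrite scale1r|left] | exists (- u); [rewrite scaleN1r|right]].
exists e => //; rewrite Ee in hnn hlt.
case: epq => -> /= in hnn hlt; rewrite -/(zpos z) -/(zneg z) in hnn hlt; [left|right].
- by split=> //; rewrite -[z in z + e](zpos_sub_zneg z) addrAC.
- by split=> //; rewrite (_ : e - z = zneg z + e - zpos z) //; col_lia.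
Qed.

Lemma reduces_distanceN u z : reduces_distance u z -> reduces_distance (- u) z.
Proof.
move=> [pq [eps [epq [eeps h]]]]; exists pq, (- eps).
rewrite scaleNr scalerN opprK; do 2 split=> //.
by case: eeps => ->; rewrite ?opprK; [right|left].
Qed.

Lemma not_reduces_distance0 z : ~ reduces_distance 0 z.
Proof.
move=> [pq [eps [epq [_ [_]]]]]; rewrite scaler0 addr0.
case: epq => -> /=; rewrite -/(zpos z) -/(zneg z).
- by rewrite zpos_sub_zneg ltnn.
- by rewrite -opprB zpos_sub_zneg norm1N ltnn.
Qed.

Lemma Dset_reducer z u : Dset A z -> reduces_distance u z -> inker A u -> u <> 0 ->
  u = z \/ u = - z.
Proof.
move=> [kz [nz [npos nneg]]] /reduces_distanceP [e Eu hcase] ku nu.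
have ke : inker A e by case: Eu => ->; [|apply: inkerN].
suff : e = z \/ e = - z.
  case: Eu => -> [] ez; [left|right|right|left]; rewrite -?ez ?opprK //.
  exact: oppr_inj.
have ne : e <> 0 by case: Eu => -> // /eqP; rewrite oppr_eq0 => /eqP.
case: hcase => [[hnn hlt]|[hnn hlt]].
- have [v0|nv] := classic (z + e = 0).
    by right; apply: col_eq => i; have := eq_entry i v0; entry_lia.
  case: npos; exists (- e), (z + e).
  split; first exact: inkerN.
  split; first exact: inkerD.
  split; first by move/eqP; rewrite oppr_eq0 => /eqP.
  do 2 split=> //; first by rewrite addrCA addNr addr0.
  by split=> // i; have := hnn i; rewrite /vpos; entry_lia.
- have [v0|nv] := classic (z - e = 0).
    by left; apply: col_eq => i; have := eq_entry i v0; entry_lia.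
  case: nneg; exists e, (z - e).
  do 2 split=> //; first exact: inkerD kz (inkerN ke).
  do 3 split=> //; first by rewrite addrC subrK.
  split; last by rewrite -norm1N opprB.
  by move=> i; have := hnn i; rewrite /vneg; entry_lia.
Qed.

Lemma distance_reducing_connects B : (forall u, B u -> inker A u) ->
  distance_reducing A B -> connects A B.
Proof.
move=> kB DR; split=> //.
suff IH N z : (norm1 z < N)%N -> inker A z -> reach B (zpos z) (zneg z).
  by move=> z; apply: IH (ltnSn _).
elim: N z => // N IH z hN kz.
have [->|nz] := classic (z = 0); first by rewrite zpos0 zneg0; apply: reach0.
have [u Bu /reduces_distanceP [e Eu hcase]] := DR z kz nz.
have ke : inker A e by case: Eu => ->; [|apply: inkerN]; apply: kB.
have step y : nonneg (y + e) -> reach B y (y + e).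
  by move=> hy; apply: reach1 Bu _ hy; case: Eu => ->; [left|right].
case: hcase => [[hnn hlt]|[hnn hlt]].
- apply: reach_trans (step _ hnn) (reach_diff hnn (nonneg_zneg z) _).
  rewrite (_ : zpos z + e - zneg z = z + e); last by col_lia.
  by apply: IH (leq_trans hlt hN) (inkerD kz ke).
- apply: reach_sym (nonneg_zneg z) _.
  apply: reach_trans (step _ hnn) (reach_diff hnn (nonneg_zpos z) _).
  rewrite (_ : zneg z + e - zpos z = e - z); last by col_lia.
  by apply: IH (leq_trans hlt hN) (inkerD ke (inkerN kz)).
Qed.

Lemma minimal_connecting_distance_reducing B :
  minimal_connecting A B -> distance_reducing A B -> minimal_distance_reducing A B.
Proof.
move=> [[kB _] hmin] DR; split=> //; split=> // B' sB' DR'.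
by apply: hmin => //; apply: distance_reducing_connects => // u /sB' /kB.
Qed.

Lemma distance_reducing_exchange_opp B z :
  distance_reducing A B -> distance_reducing A (exchange B z (- z)).
Proof.
move=> DR w kw nw; have [u Bu hr] := DR w kw nw.
have [euz|nuz] := classic (u = z); last by exists u => //; left.
by exists (- z); [right | apply: reduces_distanceN; rewrite -euz].
Qed.

End Distance.

Section ToricIdeal.
Variables (d n : nat) (A : 'M[int]_(d, n)) (K : fieldType).
Local Notation poly := {mpoly K[n]}.
Implicit Types (G : poly -> Prop) (B : 'cV[int]_n -> Prop) (g x y z u : 'cV[int]_n).

Lemma in_ideal_gen0 G : in_ideal_gen G 0.
Proof. by exists [::]; rewrite big_nil. Qed.

Lemma in_ideal_genD G p q :
  in_ideal_gen G p -> in_ideal_gen G q -> in_ideal_gen G (p + q).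
Proof.
move=> [s1 [h1 ->]] [s2 [h2 ->]]; exists (s1 ++ s2); rewrite big_cat; split=> // c.
by rewrite mem_cat => /orP[/h1|/h2].
Qed.

Lemma in_ideal_genMl G r p : in_ideal_gen G p -> in_ideal_gen G (r * p).
Proof.
move=> [s [h ->]]; exists [seq (r * c.1, c.2) | c <- s]; split.
  by move=> c /mapP [c' /h ? ->].
by rewrite big_map mulr_sumr; apply: eq_bigr => c _; rewrite mulrA.
Qed.

Lemma in_ideal_genN G p : in_ideal_gen G p -> in_ideal_gen G (- p).
Proof. by rewrite -mulN1r; apply: in_ideal_genMl. Qed.

Lemma in_ideal_gen_mem G p : G p -> in_ideal_gen G p.
Proof. by exists [:: (1, p)]; rewrite big_seq1 mul1r; split=> // c; rewrite inE => /eqP ->. Qed.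

Definition mnm_of x : 'X_{1..n} := [multinom (absz (x i ord0)) | i < n].
Definition col_of_mnm (m : 'X_{1..n}) : 'cV[int]_n := \col_i (m i)%:Z.

Lemma nonneg_col_of_mnm m : nonneg (col_of_mnm m).
Proof. by move=> i; rewrite mxE. Qed.

Lemma mnm_ofD x y : nonneg x -> nonneg y -> mnm_of (x + y) = (mnm_of x + mnm_of y)%MM.
Proof.
by move=> hx hy; apply/mnmP => i; rewrite mnmDE !mnmE entryD; have := hx i; have := hy i; lia.
Qed.

Lemma col_of_mnmD x m : nonneg x -> col_of_mnm (mnm_of x + m) = x + col_of_mnm m.
Proof.
by move=> hx; apply: col_eq => i; rewrite entryD !mxE mnmDE mnmE; have := hx i; lia.
Qed.

Lemma mnm_ofK x : nonneg x -> col_of_mnm (mnm_of x) = x.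
Proof. by move=> hx; apply: col_eq => i; rewrite mxE mnmE; have := hx i; lia. Qed.

Lemma binomE z : binom K z = 'X_[mnm_of (zpos z)] - 'X_[mnm_of (zneg z)].
Proof. by congr (_ - _); congr 'X_[_]; apply/mnmP => i; rewrite !mnmE mxE absz_nat. Qed.

Lemma binom_shift u g : nonneg g ->
  'X_[mnm_of (zpos u + g)] - 'X_[mnm_of (zneg u + g)] = 'X_[mnm_of g] * binom K u :> poly.
Proof.
move=> hg; rewrite binomE (mnm_ofD (nonneg_zpos u) hg) (mnm_ofD (nonneg_zneg u) hg) !mpolyXD.
by rewrite mulrBr ![('X_[mnm_of g] * _)]mulrC.
Qed.

Lemma reach_in_ideal B x y : nonneg x -> reach B x y ->
  in_ideal_gen (binoms B) ('X_[mnm_of x] - 'X_[mnm_of y] : poly).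
Proof.
move=> hx; elim=> [|y1 y2 u rxy1 IH Bu e h2]; first by rewrite subrr; apply: in_ideal_gen0.
have h1 := reach_nonneg rxy1 hx.
rewrite -[_ - _](subrKA ('X_[mnm_of y1])); apply: in_ideal_genD IH _.
have Gu : in_ideal_gen (binoms B) (binom K u) by apply: in_ideal_gen_mem; exists u.
case: e => e; subst y2.
- have [g hg []] := common_part h2 h1.
  have -> : y1 + u - y1 = u by rewrite addrC addKr.
  move=> -> ->.
  by rewrite -opprB binom_shift //; apply/in_ideal_genN/in_ideal_genMl.
- have [g hg []] := common_part h1 h2.
  have -> : y1 - (y1 - u) = u by rewrite opprB addrC subrK.
  move=> -> ->.
  by rewrite binom_shift //; apply: in_ideal_genMl.
Qed.

Section WeightSum.
Variable w : 'X_{1..n} -> K.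

Definition weight_sum (p : poly) := \sum_(m <- msupp p) p@_m * w m.

Lemma weight_sumE p k : (msize p <= k)%N ->
  weight_sum p = \sum_(m : 'X_{1..n < k}) p@_m * w m.
Proof.
move=> le_pk; rewrite /weight_sum (big_mksub 'X_{1..n < k}) ?msupp_uniq //=; first last.
  by move=> m /msize_mdeg_lt /leq_trans; apply.
by rewrite big_rmcond //= => m /memN_msupp_eq0 ->; rewrite mul0r.
Qed.

Lemma weight_sum_is_zmod_morphism : zmod_morphism weight_sum.
Proof.
move=> p q; set k := (msize p + msize q + msize (p - q))%N.
have hp : (msize p <= k)%N by rewrite /k -addnA leq_addr.
have hq : (msize q <= k)%N by rewrite /k addnAC leq_addl.
have hpq : (msize (p - q) <= k)%N by rewrite /k leq_addl.
rewrite (weight_sumE hpq) (weight_sumE hp) (weight_sumE hq) -sumrB.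
by apply: eq_bigr => m _; rewrite mcoeffB mulrBl.
Qed.

HB.instance Definition _ := GRing.isZmodMorphism.Build poly K weight_sum
  weight_sum_is_zmod_morphism.

Lemma weight_sumMX q a : weight_sum (q * 'X_[a]) = \sum_(m <- msupp q) q@_m * w (a + m)%MM.
Proof.
by rewrite /weight_sum (perm_big _ (msuppMX q a)) big_map; apply: eq_bigr => m _; rewrite mcoeffMX.
Qed.

Lemma weight_sumX a : weight_sum 'X_[a] = w a.
Proof. by rewrite /weight_sum msuppX big_seq1 mcoeffX eqxx mul1r. Qed.

End WeightSum.

Lemma ideal_reach B z : in_ideal_gen (binoms B) (binom K z) -> reach B (zpos z) (zneg z).
Proof.
move=> [s [hs e]]; apply: NNPP => nr.
pose C m := reach B (zpos z) (col_of_mnm m).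
pose w m : K := if excluded_middle_informative (C m) then 1 else 0.
have w_move u m : B u -> w (mnm_of (zpos u) + m)%MM = w (mnm_of (zneg u) + m)%MM.
  move=> Bu; rewrite /w /C (col_of_mnmD m (nonneg_zpos u)) (col_of_mnmD m (nonneg_zneg u)).
  have hm := nonneg_col_of_mnm m.
  case: excluded_middle_informative => c1; case: excluded_middle_informative => c2 //.
  - case: c2; apply: reachS c1 Bu _ (nonnegD (nonneg_zneg u) hm); right; col_lia.
  - case: c1; apply: reachS c2 Bu _ (nonnegD (nonneg_zpos u) hm); left; col_lia.
have vanish c : c \in s -> weight_sum w (c.1 * c.2) = 0.
  move=> cs; have [u Bu ->] := hs c cs.
  rewrite binomE mulrBr raddfB /= !weight_sumMX -sumrB.
  by apply: big1 => m _; rewrite -mulrBr w_move // subrr mulr0.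
have : weight_sum w (binom K z) = 0.
  by rewrite e raddf_sum big_seq big1 // => c /vanish.
have w1 : w (mnm_of (zpos z)) = 1.
  rewrite /w /C (mnm_ofK (nonneg_zpos z)).
  by case: excluded_middle_informative => // nc; case: (nc (reach0 _ _)).
have w0 : w (mnm_of (zneg z)) = 0.
  by rewrite /w /C (mnm_ofK (nonneg_zneg z)); case: excluded_middle_informative.
by rewrite binomE raddfB /= !weight_sumX w1 w0 subr0 => /eqP; rewrite oner_eq0.
Qed.

Lemma markov_basisE B : markov_basis A K B <-> connects A B.
Proof.
split=> [[kB hB]|[kB cB]]; split=> //.
  by move=> z kz; apply/ideal_reach/hB/in_ideal_gen_mem; exists z.
move=> p; split=> -[s [hs ->]].
  exists s; split=> // c cs; have [u Bu ->] := hs c cs; exists u => //; exact: kB.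
elim: s hs => [|c s IH] hs; first by rewrite big_nil; apply: in_ideal_gen0.
rewrite big_cons; apply: in_ideal_genD; last by apply: IH => c' cs; apply/hs/mem_behead.
have [u ku ->] := hs c (mem_head _ _); apply: in_ideal_genMl; rewrite binomE.
exact: reach_in_ideal (nonneg_zpos u) (cB u ku).
Qed.

Lemma minimal_markov_basisE B : minimal_markov_basis A K B <-> minimal_connecting A B.
Proof.
split=> -[hB hmin]; split=> [|B' sB' /markov_basisE hB']; try exact: hmin.
- exact/markov_basisE.
- exact/markov_basisE.
Qed.

End ToricIdeal.

Lemma Mset_iff_basis (K : fieldType) d n (A : 'M[int]_(d, n)) M z :
  unique_minimal_markov A K M -> Mset A K z <-> M z \/ M (- z).
Proof.
move=> [/minimal_markov_basisE hM hU]; split=> [[B /hU [sB _] /sB] // | [Mz|Mnz]].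
  by exists M => //; apply/minimal_markov_basisE.
exists (exchange M (- z) z); last by right.
by apply/minimal_markov_basisE; rewrite -{2}(opprK z); apply: exchange_opp_minimal.
Qed.

Section UniqueDistanceReducingBasis.
Variables (d n : nat) (A : 'M[int]_(d, n)) (M : 'cV[int]_n -> Prop).
Hypotheses (hpos : positive_kernel A) (hM : minimal_connecting A M).
Hypothesis hU : forall B, minimal_connecting A B -> forall z, M z -> B z \/ B (- z).
Hypothesis hDR : distance_reducing A M.
Implicit Types (u w z : 'cV[int]_n).

Lemma basis_inker_neq0 z : M z \/ M (- z) -> inker A z /\ z <> 0.
Proof.
case=> [Mz|Mnz]; first by split; [apply: (minimal_inker hM Mz) | apply: (minimal_neq0 hM Mz)].
split; first by rewrite -(opprK z); apply/inkerN/(minimal_inker hM Mnz).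
by move=> z0; apply: (minimal_neq0 hM Mnz); rewrite z0 oppr0.
Qed.

Lemma basis_fiber z w : M z \/ M (- z) -> nonneg w -> A *m w = A *m zpos z ->
  w = zpos z \/ w = zneg z.
Proof.
case=> [Mz|Mnz] hw ew; first exact: (unique_minimal_fiber hpos hM hU Mz hw ew).
have [kz _] := basis_inker_neq0 (or_intror Mnz).
have ew' : A *m w = A *m zpos (- z) by rewrite zposN ew mulmx_zpos_zneg.
by case: (unique_minimal_fiber hpos hM hU Mnz hw ew') => ->; rewrite ?zposN ?znegN; [right|left].
Qed.

Lemma Sset_of_basis z : M z \/ M (- z) -> Sset A z.
Proof.
move=> hz; have [kz nz] := basis_inker_neq0 hz.
do 2 split=> //; move=> [u [v [ku [kv [nu [nv [ezuv hi]]]]]]].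
have hw : nonneg (zpos z - u).
  by move=> i; have := eq_entry i ezuv; have := hi i; entry_lia.
have ew : A *m (zpos z - u) = A *m zpos z by rewrite mulmxBr ku subr0.
case: (basis_fiber hz hw ew) => e.
- by apply: nu; apply: col_eq => i; have := eq_entry i e; entry_lia.
- by apply: nv; apply: col_eq => i; have := eq_entry i e; have := eq_entry i ezuv; entry_lia.
Qed.

Lemma basis_of_Dset z : Dset A z -> M z \/ M (- z).
Proof.
move=> hD; have [kz [nz _]] := hD; have [u Mu hr] := hDR kz nz.
have [ku nu] := (minimal_inker hM Mu, minimal_neq0 hM Mu).
by case: (Dset_reducer hD hr ku nu) => euz; [left|right]; rewrite -euz.
Qed.

Lemma Sset_iff_basis z : Sset A z <-> M z \/ M (- z).
Proof. by split=> [/Sset_Dset/basis_of_Dset|/Sset_of_basis]. Qed.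

Lemma Dset_iff_basis z : Dset A z <-> M z \/ M (- z).
Proof. by split=> [/basis_of_Dset|/Sset_of_basis/Sset_Dset]. Qed.

(* [B] restricted to [M z \/ M (- z)] is still distance reducing, since the elements of [M]
   lie in [D(A)] and can only be reduced by themselves up to sign. *)
Lemma basis_of_Dcalset z : Dcalset A z -> M z \/ M (- z).
Proof.
move=> [B [kB [DRB hminB]] Bz]; pose B' x := B x /\ (M x \/ M (- x)).
suff DR' : distance_reducing A B' by case: (hminB B' (fun x h => h.1) DR' z Bz).
move=> w kw nw; have [u Mu hr] := hDR kw nw.
have [ku nu] := basis_inker_neq0 (or_introl Mu).
have [u' Bu' hr'] := DRB u ku nu.
have nu' : u' <> 0 by move=> u0; rewrite u0 in hr'; apply: not_reduces_distance0 hr'.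
have Du : Dset A u := Sset_Dset (Sset_of_basis (or_introl Mu)).
case: (Dset_reducer Du hr' (kB u' Bu') nu') => eu'; subst u'.
  by exists u => //; split=> //; left.
by exists (- u); [split=> //; right; rewrite opprK | apply: reduces_distanceN].
Qed.

Lemma Dcalset_of_basis z : M z \/ M (- z) -> Dcalset A z.
Proof.
case=> [Mz|Mnz]; first by exists M => //; apply: minimal_connecting_distance_reducing.
have := exchange_opp_minimal hM Mnz; have := distance_reducing_exchange_opp (- z) hDR.
rewrite opprK => DR' hM'; exists (exchange M (- z) z); last by right.
exact: minimal_connecting_distance_reducing.
Qed.

Lemma Dcalset_iff_basis z : Dcalset A z <-> M z \/ M (- z).
Proof. by split=> [/basis_of_Dcalset|/Dcalset_of_basis]. Qed.

End UniqueDistanceReducingBasis.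

Unset Implicit Arguments.
Theorem proposition8p13 (K : fieldType) (d n : nat) (A : 'M[int]_(d, n))
  (M : 'cV[int]_n -> Prop) :
  (forall z : 'cV[int]_n, inker A z -> (forall i, 0 <= z i ord0) -> z = 0) ->
  unique_minimal_markov A K M ->
  distance_reducing A M ->
  forall z : 'cV[int]_n,
    (Sset A z <-> Dset A z) /\ (Dset A z <-> Mset A K z) /\
    (Mset A K z <-> Dcalset A z).
Proof.
move=> hpos hUM hDR z; have [/minimal_markov_basisE hM hU] := hUM.
have hU' B : minimal_connecting A B -> forall z, M z -> B z \/ B (- z).
  by move=> /minimal_markov_basisE /hU [_].
rewrite (Mset_iff_basis z hUM) (Sset_iff_basis hpos hM hU' hDR) (Dset_iff_basis hpos hM hU' hDR).
by rewrite (Dcalset_iff_basis hpos hM hU' hDR).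
Qed.
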